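(* Let $A=(a_{ij})_{i,j=1}^n$ be the symmetric, entrywise nonnegative weighted adjacency matrix of an undirected graph on $n$ nodes, with degrees $d_i=\sum_j a_{ij}$ and total weight $m=\frac12\sum_{ij}a_{ij}>0$. Let $r\ge 1$ and $1\le k\le r$ be integers, and let $V=[v_1,\dots,v_n]$ with each $v_j\in\mathbb{R}^r$. Fix an index $i$ and the vectors $v_j$, $j\neq i$, and consider the subproblem $$\text{maximize}_{v_i}\; Q(v_i)\quad\text{s.t.}\quad v_i\in\mathbb{R}_+^r,\ \|v_i\|=1,\ \operatorname{card}(v_i)\le k,$$ where $Q(V)=\frac{1}{2m}\sum_{i,j}\left[a_{ij}-\frac{d_id_j}{2m}\right]v_i^Tv_j$ and $Q(v_i)$ denotes $Q$ as a function of $v_i$ alone with all other $v_j$ fixed. Let $q=\nabla Q(v_i):=\frac{1}{2m}\sum_{j\neq i}\left(a_{ij}-\frac{d_id_j}{2m}\right)v_j$. Then an optimal solution of the subproblem is $v_i=g/\|g\|$, where $$g=\begin{cases} e(t)\ \text{for a coordinate } t \text{ maximizing } q_t, & \text{if } q\le 0 \text{ (entrywise)},\\ \operatorname{top}_k^+(q), & \text{otherwise.}\end{cases}$$ (In the case $q\le 0$, if several $t$ attain the maximum of $q_t$, one chooses among them the $t$ with maximum $(v_i)_t$ for the previous value of $v_i$.)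
   Context: $\|\cdot\|$ is the Euclidean norm; $\operatorname{card}(v)$ is the number of nonzero entries of $v$; $e(t)$ is the standard basis vector of coordinate $t$ in $\mathbb{R}^r$. For $q\in\mathbb{R}^r$, $\operatorname{top}_k^+(q)$ is the vector of the same shape that keeps the $k$ largest coordinates of $q$ when they are nonnegative and sets all other coordinates (including negative ones among the top $k$) to zero; e.g. $\operatorname{top}_2^+((-1,3))=(0,3)$ and $\operatorname{top}_1^+((-1,-2))=(0,0)$. Note that the term of $Q$ involving $v_i^Tv_i$ is constant on the feasible set since $\|v_i\|=1$. *)

From HB Require Import structures.
From mathcomp Require Import all_boot all_order all_algebra.
Set Implicit Arguments. Unset Strict Implicit. Unset Printing Implicit Defensive.
Import Order.TTheory GRing.Theory Num.Theory.
Local Open Scope ring_scope.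

Section Defs.
Variables (R : rcfType) (n r : nat).

Definition dotv (u v : 'rV[R]_r) : R := \sum_(t < r) u 0 t * v 0 t.
Definition normv (u : 'rV[R]_r) : R := Num.sqrt (dotv u u).

Definition cardv (u : 'rV[R]_r) : nat := #|[set t : 'I_r | u 0 t != 0]|.

Definition ebasis (t : 'I_r) : 'rV[R]_r := \row_(s < r) (s == t)%:R.

Definition deg (A : 'M[R]_n) (i : 'I_n) : R := \sum_(j < n) A i j.
Definition totw (A : 'M[R]_n) : R := (\sum_(i < n) \sum_(j < n) A i j) / 2.

Definition Qobj (A : 'M[R]_n) (V : 'I_n -> 'rV[R]_r) : R :=
  (2 * totw A)^-1 * \sum_(i < n) \sum_(j < n)
     (A i j - deg A i * deg A j / (2 * totw A)) * dotv (V i) (V j).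

Definition upd (V : 'I_n -> 'rV[R]_r) (i : 'I_n) (x : 'rV[R]_r) : 'I_n -> 'rV[R]_r :=
  fun j => if j == i then x else V j.

Definition gradq (A : 'M[R]_n) (V : 'I_n -> 'rV[R]_r) (i : 'I_n) : 'rV[R]_r :=
  (2 * totw A)^-1 *: \sum_(j < n | j != i)
     (A i j - deg A i * deg A j / (2 * totw A)) *: V j.

Definition feasible (k : nat) (x : 'rV[R]_r) : Prop :=
  (forall t, 0 <= x 0 t) /\ normv x = 1 /\ (cardv x <= k)%N.

(* g = top_k^+(q): there is a set S of k coordinates holding the k largest
   values of q (ties broken arbitrarily); g keeps q_t for t in S with q_t >= 0
   and is zero elsewhere. *)
Definition is_topk_plus (k : nat) (q g : 'rV[R]_r) : Prop :=
  exists S : {set 'I_r},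
    #|S| = k /\
    (forall s u, s \in S -> u \notin S -> q 0 u <= q 0 s) /\
    (forall t, g 0 t = if (t \in S) && (0 <= q 0 t) then q 0 t else 0).

End Defs.

(* Q is quadratic in v_i and its quadratic part is a multiple of
   |v_i|^2, which is constant on the feasible set, so maximizing Q amounts to
   maximizing the linear form <x, q>.  If q <= 0 and q_t = max q, then for a
   nonnegative unit vector x every term satisfies x_s q_s <= x_s^2 q_t, hence
   <x, q> <= q_t = <e(t), q>.  Otherwise g = top_k^+(q) satisfies <g, q> = |g|^2.
   For feasible x, replacing q by q^+ restricted to the support of x only
   increases <x, q>; that restriction has at most k nonzero entries, so its norm
   is at most |g|, and Cauchy-Schwarz gives <x, q> <= |g| = <g / |g|, q>. *)

From HB Require Import structures.
From mathcomp Require Import all_boot all_order all_algebra.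
From mathcomp Require Import ring lra.
Set Implicit Arguments. Unset Strict Implicit. Unset Printing Implicit Defensive.
Import Order.TTheory GRing.Theory Num.Theory.
Local Open Scope ring_scope.

Lemma sum_le_dominant_set (R : realDomainType) (I : finType) (f : I -> R)
    (S T : {set I}) :
  (forall t, 0 <= f t) -> (forall s u, s \in S -> u \notin S -> f u <= f s) ->
  (#|T| <= #|S|)%N -> \sum_(t in T) f t <= \sum_(t in S) f t.
Proof.
move=> f_ge0 S_dom cardTS.
have [S0|[s0 s0S]] := set_0Vmem S.
  by move: cardTS; rewrite S0 cards0 leqn0 cards_eq0 => /eqP ->; rewrite !big_set0.
(* Shift by [c := min_S f]: then [f - c] is >= 0 on [S] and <= 0 off [S], and
   [c >= 0] absorbs [#|T| <= #|S|]. *)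
have [s sS s_min] := @arg_minP _ _ _ s0 (mem S) f s0S.
set c := f s.
have sumTc : \sum_(t in T) (f t - c) <= \sum_(t in S) (f t - c).
  rewrite big_mkcond [X in _ <= X]big_mkcond /=; apply: ler_sum => t _.
  case tT: (t \in T); case tS: (t \in S) => //.
  - by rewrite subr_le0 S_dom ?tS.
  - by rewrite subr_ge0 s_min.
have cardc : c *+ #|T| <= c *+ #|S| := ler_wpMn2l (f_ge0 s) cardTS.
rewrite !sumrB !sumr_const in sumTc; lra.
Qed.

Section InnerProduct.
Variables (R : rcfType) (r : nat).
Implicit Types (u v x : 'rV[R]_r).

Lemma dotvC u v : dotv u v = dotv v u.
Proof. by apply: eq_bigr => t _; rewrite mulrC. Qed.

Lemma dotvZl a u v : dotv (a *: u) v = a * dotv u v.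
Proof. by rewrite /dotv mulr_sumr; apply: eq_bigr => t _; rewrite mxE mulrA. Qed.

Lemma dotvZr a u v : dotv u (a *: v) = a * dotv u v.
Proof. by rewrite dotvC dotvZl dotvC. Qed.

Lemma dotv_sumr (I : finType) (P : pred I) (c : I -> R) (W : I -> 'rV[R]_r) x :
  dotv x (\sum_(j | P j) c j *: W j) = \sum_(j | P j) c j * dotv x (W j).
Proof.
rewrite /dotv; under eq_bigr => t _ do rewrite summxE mulr_sumr.
rewrite exchange_big /=; apply: eq_bigr => j _.
by rewrite mulr_sumr; apply: eq_bigr => t _; rewrite mxE mulrCA.
Qed.

Lemma dotvv_ge0 u : 0 <= dotv u u.
Proof. by apply: sumr_ge0 => t _; rewrite -expr2 sqr_ge0. Qed.

Lemma sqr_normv u : normv u ^+ 2 = dotv u u.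
Proof. exact/sqr_sqrtr/dotvv_ge0. Qed.

Lemma normv_gt0 u : (0 < normv u) = (0 < dotv u u).
Proof. exact: sqrtr_gt0. Qed.

Lemma sqr_entry_le_dotv u t : u 0 t ^+ 2 <= dotv u u.
Proof.
rewrite /dotv (bigD1 t) //= -expr2 lerDl.
by apply: sumr_ge0 => s _; rewrite -expr2 sqr_ge0.
Qed.

Lemma dotv_ebasisl t u : dotv (ebasis R t) u = u 0 t.
Proof.
rewrite /dotv (bigD1 t) //= big1 => [|s st]; rewrite !mxE ?eqxx.
  by rewrite mul1r addr0.
by rewrite (negbTE st) mul0r.
Qed.

Lemma normv_ebasis (t : 'I_r) : normv (ebasis R t) = 1.
Proof. by rewrite /normv dotv_ebasisl mxE eqxx sqrtr1. Qed.

Lemma cardv_ebasis (t : 'I_r) : cardv (ebasis R t) = 1%N.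
Proof.
rewrite /cardv -[RHS](cards1 t); apply: eq_card => s.
by rewrite !inE mxE; case: (s == t); rewrite ?oner_eq0 ?eqxx.
Qed.

Lemma cardvZ a u : (cardv (a *: u) <= cardv u)%N.
Proof.
apply/subset_leq_card/subsetP => t; rewrite !inE mxE.
by apply: contra => /eqP ->; rewrite mulr0.
Qed.

(* Cauchy-Schwarz, through [2 c <u, v> <= c^2 |u|^2 + |v|^2]. *)
Lemma dotv_le_of_unit c u v :
  0 < c -> dotv u u = 1 -> dotv v v <= c ^+ 2 -> dotv u v <= c.
Proof.
move=> c_gt0 uu1 vv_le.
have amgm : 2 * c * dotv u v <= c ^+ 2 * dotv u u + dotv v v.
  rewrite /dotv !mulr_sumr -big_split /=; apply: ler_sum => t _.
  rewrite -subr_ge0 (_ : _ - _ = (c * u 0 t - v 0 t) ^+ 2) ?sqr_ge0 //; ring.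
rewrite uu1 mulr1 in amgm.
have : c * dotv u v <= c * c by lra.
by rewrite ler_pM2l.
Qed.

End InnerProduct.

Section Feasibility.
Variables (R : rcfType) (r k : nat).
Implicit Types (g q x : 'rV[R]_r).

Definition maximizes_dotv q v :=
  feasible k v /\ forall x, feasible k x -> dotv x q <= dotv v q.

Lemma feasible_dotvv x : feasible k x -> dotv x x = 1.
Proof. by case=> _ [x1 _]; rewrite -sqr_normv x1 expr1n. Qed.

Lemma feasible_entry_le1 x t : feasible k x -> x 0 t <= 1.
Proof.
move=> x_feas; have := sqr_entry_le_dotv x t; rewrite feasible_dotvv //.
by have := x_feas.1 t; nra.
Qed.

Lemma feasible_normalize g :
  (forall t, 0 <= g 0 t) -> 0 < dotv g g -> (cardv g <= k)%N ->
  feasible k ((normv g)^-1 *: g).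
Proof.
move=> g_ge0 gg_gt0 card_g; have N_gt0 : 0 < normv g by rewrite normv_gt0.
split; first by move=> t; rewrite mxE mulr_ge0 // invr_ge0 ltW.
split; last exact: leq_trans (cardvZ _ _) card_g.
set N := normv g; rewrite /normv dotvZl dotvZr -sqr_normv -/N.
by rewrite mulrA -expr2 -exprMn mulVf ?expr1n ?sqrtr1 // gt_eqF.
Qed.

Lemma ebasis_maximizes_dotv q t :
  (0 < k)%N -> (forall s, q 0 s <= q 0 t) -> q 0 t <= 0 ->
  maximizes_dotv q (ebasis R t).
Proof.
move=> k_gt0 t_max qt_le0; split.
  split; first by move=> s; rewrite mxE ler0n.
  by rewrite normv_ebasis cardv_ebasis.
move=> x x_feas; rewrite dotv_ebasisl -[q 0 t]mul1r -(feasible_dotvv x_feas).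
rewrite /dotv mulr_suml; apply: ler_sum => s _.
(* x_s q_s <= x_s q_t <= x_s^2 q_t, as 0 <= x_s <= 1 and q_t <= 0 *)
have xs_ge0 := x_feas.1 s.
have xs_le1 : 0 <= 1 - x 0 s by rewrite subr_ge0 (feasible_entry_le1 s x_feas).
have nqt_ge0 : 0 <= - q 0 t by rewrite oppr_ge0.
have := mulr_ge0 (mulr_ge0 xs_ge0 xs_le1) nqt_ge0.
have := t_max s; nra.
Qed.

End Feasibility.

Section TopKPlus.
Variables (R : rcfType) (r k : nat) (q g : 'rV[R]_r) (S : {set 'I_r}).
Hypotheses (cardS : #|S| = k)
  (S_top : forall s u, s \in S -> u \notin S -> q 0 u <= q 0 s)
  (gE : forall t, g 0 t = if (t \in S) && (0 <= q 0 t) then q 0 t else 0).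

Let qplus t := Num.max (q 0 t) 0.

Lemma topk_plusE t : g 0 t = if t \in S then qplus t else 0.
Proof. by rewrite gE /qplus; case: (t \in S) => //=; case: lerP. Qed.

Lemma topk_plus_ge0 t : 0 <= g 0 t.
Proof. by rewrite topk_plusE; case: ifP; rewrite // le_max lexx orbT. Qed.

Lemma cardv_topk_plus : (cardv g <= k)%N.
Proof.
rewrite -cardS; apply/subset_leq_card/subsetP => t.
by rewrite inE topk_plusE; case: ifP; rewrite ?eqxx.
Qed.

Lemma dotv_topk_plus : dotv g q = dotv g g.
Proof.
apply: eq_bigr => t _; rewrite gE.
by case: ifP => [/andP[_ /max_idPl <-]|_]; rewrite ?mul0r.
Qed.

Lemma dotv_topk_plus_gt0 : (0 < k)%N -> (exists u, 0 < q 0 u) -> 0 < dotv g g.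
Proof.
move=> k_gt0 [u qu_gt0].
have [s sS qs_gt0] : exists2 s, s \in S & 0 < q 0 s.
  have [uS|uNS] := boolP (u \in S); first by exists u.
  have [s0 s0S] : exists s0, s0 \in S by apply/set0Pn; rewrite -card_gt0 cardS.
  by exists s0 => //; apply: lt_le_trans qu_gt0 (S_top s0S uNS).
apply: lt_le_trans (sqr_entry_le_dotv g s).
by rewrite gE sS ltW // exprn_gt0.
Qed.

Lemma dotv_le_normv_topk_plus x :
  feasible k x -> 0 < dotv g g -> dotv x q <= normv g.
Proof.
move=> x_feas gg_gt0.
set y := \row_t (if x 0 t != 0 then qplus t else 0).
have xq_le_xy : dotv x q <= dotv x y.
  apply: ler_sum => t _; rewrite mxE; case: eqP => [->|_]; first by rewrite !mul0r.
  by rewrite ler_wpM2l ?x_feas.1 // le_max lexx.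
have yy_le : dotv y y <= normv g ^+ 2.
  have -> : dotv y y = \sum_(t in [set t | x 0 t != 0]) qplus t ^+ 2.
    rewrite big_mkcond; apply: eq_bigr => t _; rewrite mxE inE.
    by case: ifP; rewrite ?mul0r.
  have -> : normv g ^+ 2 = \sum_(t in S) qplus t ^+ 2.
    rewrite sqr_normv big_mkcond; apply: eq_bigr => t _; rewrite topk_plusE.
    by case: ifP; rewrite ?mul0r.
  apply: sum_le_dominant_set => [t|s u sS uNS|]; first exact: sqr_ge0.
    have qplus_ge0 v : 0 <= qplus v by rewrite le_max lexx orbT.
    by rewrite ler_sqr ?nnegrE // le_max2 ?S_top.
  by rewrite cardS; exact: x_feas.2.2.
apply: le_trans xq_le_xy _; apply: dotv_le_of_unit yy_le.
  by rewrite normv_gt0.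
exact: feasible_dotvv x_feas.
Qed.

End TopKPlus.

Lemma topk_plus_maximizes_dotv (R : rcfType) (r k : nat) (q g : 'rV[R]_r) :
  (0 < k)%N -> (exists u, 0 < q 0 u) -> is_topk_plus k q g ->
  maximizes_dotv k q ((normv g)^-1 *: g).
Proof.
move=> k_gt0 q_pos [S [cardS [S_top gE]]].
have gg_gt0 := dotv_topk_plus_gt0 cardS S_top gE k_gt0 q_pos.
split.
  apply: feasible_normalize gg_gt0 _; first exact: topk_plus_ge0 gE.
  exact: cardv_topk_plus cardS gE.
move=> x x_feas; rewrite dotvZl (dotv_topk_plus gE) -sqr_normv.
have N_gt0 : 0 < normv g by rewrite normv_gt0.
rewrite expr2 mulrA mulVf ?mul1r ?gt_eqF //.
exact: dotv_le_normv_topk_plus cardS S_top gE x x_feas gg_gt0.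
Qed.

Section ObjectiveInOneBlock.
Variables (R : rcfType) (n r : nat) (A : 'M[R]_n) (V : 'I_n -> 'rV[R]_r).
Variable i : 'I_n.
Hypothesis A_sym : A^T = A.

Let B a b := A a b - deg A a * deg A b / (2 * totw A).

Let B_sym a b : B a b = B b a.
Proof. by rewrite /B -{1}A_sym mxE (mulrC (deg A b)). Qed.

Let QobjE (W : 'I_n -> 'rV[R]_r) : Qobj A W =
  (2 * totw A)^-1 * \sum_(a < n) \sum_(b < n) B a b * dotv (W a) (W b).
Proof. by []. Qed.

Let gradqE : gradq A V i = (2 * totw A)^-1 *: \sum_(j < n | j != i) B i j *: V j.
Proof. by []. Qed.

Lemma Qobj_updE : exists c0 c1 : R, forall x,
  Qobj A (upd V i x) = c0 + c1 * dotv x x + 2 * dotv x (gradq A V i).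
Proof.
exists ((2 * totw A)^-1 *
  \sum_(a < n | a != i) \sum_(b < n | b != i) B a b * dotv (V a) (V b)).
exists ((2 * totw A)^-1 * B i i) => x; set W := upd V i x.
have W_neq a : a != i -> W a = V a by rewrite /W /upd => /negbTE ->.
have row_i : \sum_(b < n) B i b * dotv (W i) (W b) =
    B i i * dotv x x + \sum_(b < n | b != i) B i b * dotv x (V b).
  rewrite (bigD1 i) //= /W /upd eqxx; congr (_ + _).
  by apply: eq_bigr => b /negbTE ->.
have row_a a : a != i -> \sum_(b < n) B a b * dotv (W a) (W b) =
    B i a * dotv x (V a) + \sum_(b < n | b != i) B a b * dotv (V a) (V b).
  move=> a_neq_i; rewrite (bigD1 i) //= W_neq // /W /upd eqxx B_sym dotvC.
  by congr (_ + _); apply: eq_bigr => b /negbTE ->.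
rewrite QobjE (bigD1 i) //= row_i (eq_bigr _ row_a) big_split /=.
rewrite gradqE dotvZr dotv_sumr; ring.
Qed.

Lemma Qobj_upd_le x y :
  dotv x x = dotv y y -> dotv x (gradq A V i) <= dotv y (gradq A V i) ->
  Qobj A (upd V i x) <= Qobj A (upd V i y).
Proof.
have [c0 [c1 QE]] := Qobj_updE; move=> xx_yy xq_le_yq.
by rewrite !QE xx_yy lerD2l ler_pM2l.
Qed.

End ObjectiveInOneBlock.

Theorem proposition1 (R : rcfType) (n r k : nat) (A : 'M[R]_n)
    (V : 'I_n -> 'rV[R]_r) (i : 'I_n) :
  A^T = A ->
  (forall a b, 0 <= A a b) ->
  0 < totw A ->
  (1 <= r)%N -> (1 <= k)%N -> (k <= r)%N ->
  let q := gradq A V i in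
  forall g : 'rV[R]_r,
    (if [forall t, q 0 t <= 0] then
       (exists t : 'I_r,
          (forall s, q 0 s <= q 0 t) /\
          (forall s, q 0 s = q 0 t -> V i 0 s <= V i 0 t) /\
          g = ebasis R t)
     else is_topk_plus k q g) ->
    let vopt := (normv g)^-1 *: g in
    feasible k vopt /\
    (forall x, feasible k x -> Qobj A (upd V i x) <= Qobj A (upd V i vopt)).
Proof.
move=> A_sym _ _ _ k_gt0 _ q g g_def vopt.
have [vopt_feas vopt_max] : maximizes_dotv k q vopt.
  rewrite /vopt; case: ifP g_def => [q_le0 [t [t_max [_ ->]]] | /negbT q_pos].
    rewrite normv_ebasis invr1 scale1r.
    exact: ebasis_maximizes_dotv k_gt0 t_max (forallP q_le0 t).
  apply: topk_plus_maximizes_dotv k_gt0 _.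
  by move/forallPn: q_pos => [u]; rewrite -ltNge; exists u.
split=> // x x_feas; apply: (Qobj_upd_le A_sym _ (vopt_max x x_feas)).
by rewrite !(feasible_dotvv (k := k)).
Qed.
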